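(* Let $\sigma>0$, $\lambda_1,\lambda_2>0$, $m_g\ge1$. Suppose $\boldsymbol\beta_g\mid\tau_{g1}^2,\dots,\tau_{gm_g}^2,\gamma_g^2,\sigma^2\sim N_{m_g}(\mathbf 0,\sigma^2\mathbf V_g)$ with $\mathbf V_g=\mathrm{diag}\{(\tau_{gj}^{-2}+\gamma_g^{-2})^{-1}, j=1,\dots,m_g\}$, and $(\tau_{g1}^2,\dots,\tau_{gm_g}^2,\gamma_g^2)\in(0,\infty)^{m_g+1}$ has density $$\pi(\tau^2_{g1},\dots,\tau^2_{gm_g},\gamma^2_g)=c_g(\lambda_1^2,\lambda_2^2)\prod_{j=1}^{m_g}\Big[(\tau^2_{gj})^{-1/2}\Big(\frac1{\tau^2_{gj}}+\frac1{\gamma^2_g}\Big)^{-1/2}\Big](\gamma_g^2)^{-1/2}\exp\Big\{-\frac{\lambda_1^2}{2}\sum_{j=1}^{m_g}\tau^2_{gj}-\frac{\lambda_2^2}{2}\gamma_g^2\Big\}.$$ Then this density is integrable (so a normalizing constant $c_g(\lambda_1^2,\lambda_2^2)\in(0,\infty)$ exists, i.e., the prior is proper), and the marginal prior of $\boldsymbol\beta_g$ satisfies $$\pi(\boldsymbol\beta_g\mid\sigma^2)\propto\exp\Big\{-\frac{\lambda_1}{\sigma}\|\boldsymbol\beta_g\|_1-\frac{\lambda_2}{\sigma}\|\boldsymbol\beta_g\|_2\Big\}.$$ *)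

From Stdlib Require Import Reals Lra List.
Import ListNotations.
Open Scope R_scope.

Fixpoint sumR (n : nat) (f : nat -> R) : R :=
  match n with O => 0 | S k => sumR k f + f k end.
Fixpoint prodR (n : nat) (f : nat -> R) : R :=
  match n with O => 1 | S k => prodR k f * f k end.

Definition ImpInt (f : R -> R) (l : R) : Prop :=
  (forall a b, 0 < a -> a <= b -> exists pr : Riemann_integrable f a b, True) /\
  (forall eps, 0 < eps -> exists a0 b0, 0 < a0 /\ a0 <= b0 /\
     forall a b (pr : Riemann_integrable f a b),
       0 < a -> a <= a0 -> b0 <= b -> Rabs (RiemannInt pr - l) < eps).

(* Iterated improper integral over (0,+oo)^k of F : list R -> R
   (the first list entry is the outermost integration variable). *)
Fixpoint IterInt (k : nat) (F : list R -> R) (l : R) : Prop :=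
  match k with
  | O => l = F []
  | S k' => exists G : R -> R, ImpInt G l /\
      forall t, 0 < t -> IterInt k' (fun xs => F (t :: xs)) (G t)
  end.

(* Coordinates of xs = [gamma^2; tau_1^2; ...; tau_m^2]. *)
Definition gam2 (xs : list R) : R := nth 0 xs 0.
Definition tau2 (xs : list R) (j : nat) : R := nth (S j) xs 0.

Definition vdiag (xs : list R) (j : nat) : R := / (/ tau2 xs j + / gam2 xs).

Definition prior_unnorm (m : nat) (l1 l2 : R) (xs : list R) : R :=
  prodR m (fun j => / sqrt (tau2 xs j) * / sqrt (/ tau2 xs j + / gam2 xs))
  * / sqrt (gam2 xs)
  * exp (- (l1 ^ 2 / 2) * sumR m (fun j => tau2 xs j) - (l2 ^ 2 / 2) * gam2 xs).

Definition normal_dens (m : nat) (sigma : R) (beta : nat -> R) (xs : list R) : R :=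
  prodR m (fun j => / sqrt (2 * PI * sigma ^ 2 * vdiag xs j)
                    * exp (- (beta j ^ 2) / (2 * sigma ^ 2 * vdiag xs j))).

Definition norm1 (m : nat) (beta : nat -> R) : R := sumR m (fun j => Rabs (beta j)).
Definition norm2 (m : nat) (beta : nat -> R) : R := sqrt (sumR m (fun j => beta j ^ 2)).

From Coquelicot Require Import Coquelicot.
From Stdlib Require Import Reals List Lra Classical ClassicalEpsilon.
Open Scope R_scope.

(* For fixed gamma^2 = t, the integral over tau_j^2 = u of the prior factor
   sqrt (t / (t + u)) exp (- c u) is at most 1 / c and depends continuously on t,
   so the remaining gamma^2-integrand is dominated by t^(-1/2) exp (- c t) and the
   prior is proper.  For the marginal, completing the square in
   1 / vdiag = 1 / tau^2 + 1 / gamma^2 factors the joint integrand into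
   t^(-1/2) exp (- a t - b / t) in every variance, with a = lambda^2 / 2 and
   b = beta_j^2 / (2 sigma^2) (resp. |beta|_2^2 / (2 sigma^2) for gamma^2).  The
   Cauchy-Schlomilch substitution u = sqrt (b / a) / v shows that such an integral
   is exp (- 2 sqrt (a b)) times its value at b = 0, and
   2 sqrt (a b) = (lambda / sigma) |beta_j| (resp. (lambda / sigma) |beta|_2). *)

(* Coquelicot states these for any normed module, with [plus] and [scal] for
   [Rplus] and [Rmult]; the specializations below can rewrite real integrals. *)
Lemma RInt_Chasles_R (f : R -> R) a b c :
  ex_RInt f a b -> ex_RInt f b c -> RInt f a b + RInt f b c = RInt f a c.
Proof. exact (RInt_Chasles f a b c). Qed.

Lemma RInt_scal_R (f : R -> R) a b k :
  ex_RInt f a b -> RInt (fun x => k * f x) a b = k * RInt f a b.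
Proof. exact (RInt_scal f a b k). Qed.

Lemma ex_RInt_scal_R (f : R -> R) a b k :
  ex_RInt f a b -> ex_RInt (fun x => k * f x) a b.
Proof. exact (ex_RInt_scal f a b k). Qed.

Lemma RInt_plus_R (f g : R -> R) a b : ex_RInt f a b -> ex_RInt g a b ->
  RInt (fun x => f x + g x) a b = RInt f a b + RInt g a b.
Proof. exact (RInt_plus f g a b). Qed.

Lemma RInt_minus_R (f g : R -> R) a b : ex_RInt f a b -> ex_RInt g a b ->
  RInt (fun x => f x - g x) a b = RInt f a b - RInt g a b.
Proof. exact (RInt_minus f g a b). Qed.

Lemma ex_RInt_minus_R (f g : R -> R) a b : ex_RInt f a b -> ex_RInt g a b ->
  ex_RInt (fun x => f x - g x) a b.
Proof. exact (ex_RInt_minus f g a b). Qed.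

Lemma RInt_swap_R (f : R -> R) a b : ex_RInt f a b -> RInt f b a = - RInt f a b.
Proof. intros H. rewrite <- (opp_RInt_swap f a b H). reflexivity. Qed.

Lemma RInt_comp_R (f g dg : R -> R) a b :
  (forall x, Rmin a b <= x <= Rmax a b -> continuous f (g x)) ->
  (forall x, Rmin a b <= x <= Rmax a b -> is_derive g x (dg x) /\ continuous dg x) ->
  RInt (fun y => dg y * f (g y)) a b = RInt f (g a) (g b).
Proof. exact (RInt_comp f g dg a b). Qed.

Lemma RInt_derive_R (F f : R -> R) a b : a <= b ->
  (forall x, a <= x <= b -> is_derive F x (f x)) ->
  (forall x, a <= x <= b -> continuous f x) -> RInt f a b = F b - F a.
Proof.
  intros hab HD HC. apply is_RInt_unique, (is_RInt_derive F f a b);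
    intros x hx; rewrite Rmin_left, Rmax_right in hx by lra; auto.
Qed.

Lemma continuous_of_ex_derive (f : R -> R) x : ex_derive f x -> continuous f x.
Proof. apply (ex_derive_continuous (K:=R_AbsRing) (V:=R_NormedModule)). Qed.

Lemma interval_pos a b x : 0 < a -> 0 < b -> Rmin a b <= x <= Rmax a b -> 0 < x.
Proof. intros ha hb hx. pose proof (Rmin_glb_lt a b 0 ha hb). lra. Qed.

Lemma ex_RInt_pos (f : R -> R) a b : 0 < a -> 0 < b ->
  (forall x, 0 < x -> continuous f x) -> ex_RInt f a b.
Proof.
  intros ha hb Hc. apply (ex_RInt_continuous (V:=R_CompleteNormedModule)).
  intros z hz. apply Hc, (interval_pos a b); auto.
Qed.

(* Coquelicot states integral identities at the carrier of a normed module;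
   [ring] and [field] need them at type [R]. *)
Ltac R_eq := match goal with |- ?A = ?B => change (@eq R A B) end.
Ltac nonzero :=
  repeat split; repeat apply Rmult_integral_contrapositive_currified; intro; nra.

(** * Improper integrals over (0, +oo) *)

Definition is_ImpRInt (f : R -> R) (l : R) : Prop :=
  (forall a b, 0 < a -> a <= b -> ex_RInt f a b) /\
  (forall eps, 0 < eps -> exists a0 b0, 0 < a0 /\ a0 <= b0 /\
     forall a b, 0 < a -> a <= a0 -> b0 <= b -> Rabs (RInt f a b - l) < eps).

Lemma is_ImpRInt_ImpInt f l : is_ImpRInt f l -> ImpInt f l.
Proof.
  intros [Hex Hlim]; split.
  - intros a b ha hab. exists (ex_RInt_Reals_0 _ _ _ (Hex a b ha hab)); exact I.
  - intros eps he. destruct (Hlim eps he) as (a0 & b0 & h0 & h1 & h2).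
    exists a0, b0; repeat split; auto.
    intros a b pr ha hb1 hb2. rewrite <- RInt_Reals. auto.
Qed.

Lemma is_ImpRInt_ext f g l :
  (forall x, 0 < x -> f x = g x) -> is_ImpRInt f l -> is_ImpRInt g l.
Proof.
  intros E [Hex Hlim].
  assert (Eab : forall a b, 0 < a -> a <= b -> RInt g a b = RInt f a b).
  { intros a b ha hab. symmetry. apply RInt_ext.
    intros x hx. rewrite Rmin_left in hx by lra. apply E. lra. }
  split.
  - intros a b ha hab. apply (ex_RInt_ext f); auto.
    intros x hx. rewrite Rmin_left in hx by lra. apply E. lra.
  - intros eps he. destruct (Hlim eps he) as (a0 & b0 & h0 & h1 & h2).
    exists a0, b0; repeat split; auto.
    intros a b ha hb1 hb2. rewrite Eab by lra. auto.
Qed.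

Lemma is_ImpRInt_scal f l k : is_ImpRInt f l -> is_ImpRInt (fun x => k * f x) (k * l).
Proof.
  intros [Hex Hlim]; split.
  - intros; apply ex_RInt_scal_R; auto.
  - intros eps he. pose proof (Rabs_pos k) as hk.
    destruct (Hlim (eps / (Rabs k + 1))) as (a0 & b0 & h0 & h1 & h2).
    { apply Rdiv_lt_0_compat; lra. }
    exists a0, b0; repeat split; auto.
    intros a b ha hb1 hb2. rewrite RInt_scal_R by (apply Hex; lra).
    replace (k * RInt f a b - k * l) with (k * (RInt f a b - l)) by ring.
    rewrite Rabs_mult.
    specialize (h2 a b ha hb1 hb2). pose proof (Rabs_pos (RInt f a b - l)).
    apply Rle_lt_trans with ((Rabs k + 1) * Rabs (RInt f a b - l)); [nra|].
    replace eps with ((Rabs k + 1) * (eps / (Rabs k + 1))) by (field; lra).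
    apply Rmult_lt_compat_l; lra.
Qed.

Lemma is_ImpRInt_minus f g lf lg : is_ImpRInt f lf -> is_ImpRInt g lg ->
  is_ImpRInt (fun x => f x - g x) (lf - lg).
Proof.
  intros [Fex Flim] [Gex Glim]; split.
  - intros; apply ex_RInt_minus_R; auto.
  - intros eps he.
    destruct (Flim (eps / 2)) as (a0 & b0 & h0 & h1 & h2); [lra|].
    destruct (Glim (eps / 2)) as (a1 & b1 & g0 & g1 & g2); [lra|].
    pose proof (Rmin_l a0 a1). pose proof (Rmin_r a0 a1).
    pose proof (Rmax_l b0 b1). pose proof (Rmax_r b0 b1).
    exists (Rmin a0 a1), (Rmax b0 b1).
    split; [apply Rmin_pos; auto|split; [lra|]].
    intros a b ha hb1 hb2.
    rewrite RInt_minus_R by (first [apply Fex | apply Gex]; lra).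
    specialize (h2 a b ha ltac:(lra) ltac:(lra)).
    specialize (g2 a b ha ltac:(lra) ltac:(lra)).
    replace (RInt f a b - RInt g a b - (lf - lg)) with
      ((RInt f a b - lf) - (RInt g a b - lg)) by ring.
    eapply Rle_lt_trans; [apply Rabs_triang|]. rewrite Rabs_Ropp. lra.
Qed.

Lemma is_ImpRInt_unique f l1 l2 : is_ImpRInt f l1 -> is_ImpRInt f l2 -> l1 = l2.
Proof.
  intros H1 H2. apply Rminus_diag_uniq.
  destruct (is_ImpRInt_minus _ _ _ _ H1 H2) as [_ Hlim].
  destruct (Req_dec (l1 - l2) 0) as [|Hne]; auto.
  destruct (Hlim (Rabs (l1 - l2))) as (a0 & b0 & h0 & h1 & h2).
  { apply Rabs_pos_lt; auto. }
  specialize (h2 a0 b0 h0 (Rle_refl _) (Rle_refl _)).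
  rewrite (RInt_ext _ (fun _ => 0)), RInt_const in h2 by (intros; R_eq; ring).
  change (Rabs ((b0 - a0) * 0 - (l1 - l2)) < Rabs (l1 - l2)) in h2.
  rewrite Rmult_0_r, Rminus_0_l, Rabs_Ropp in h2. lra.
Qed.

Lemma is_ImpRInt_abs_le f l M : is_ImpRInt f l ->
  (forall a b, 0 < a -> a <= b -> Rabs (RInt f a b) <= M) -> Rabs l <= M.
Proof.
  intros [_ Hlim] HM. apply Rnot_lt_le; intro Hc.
  destruct (Hlim (Rabs l - M)) as (a0 & b0 & h0 & h1 & h2); [lra|].
  specialize (h2 a0 b0 h0 (Rle_refl _) (Rle_refl _)).
  specialize (HM a0 b0 h0 h1).
  pose proof (Rabs_triang_inv l (RInt f a0 b0)).
  rewrite <- Rabs_Ropp in h2.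
  replace (- (RInt f a0 b0 - l)) with (l - RInt f a0 b0) in h2 by ring. lra.
Qed.

(* The improper integral is the supremum of the integrals over the compact
   subintervals of (0, +oo), which exists since they are bounded. *)
Lemma ex_ImpRInt_pos_bounded (f : R -> R) B :
  (forall x, 0 < x -> continuous f x) -> (forall x, 0 < x -> 0 < f x) ->
  (forall a b, 0 < a -> a <= b -> RInt f a b <= B) ->
  exists l, is_ImpRInt f l /\ 0 < l <= B.
Proof.
  intros Hc Hp HB.
  assert (Hex : forall a b, 0 < a -> 0 < b -> ex_RInt f a b)
    by (intros; apply ex_RInt_pos; auto).
  assert (Hge : forall a b, 0 < a -> a <= b -> 0 <= RInt f a b).
  { intros a b ha hab. apply RInt_ge_0; auto; try (apply Hex; lra).
    intros x hx; left; apply Hp; lra. }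
  set (E := fun y => exists a b, 0 < a /\ a <= b /\ y = RInt f a b).
  assert (bE : bound E) by (exists B; intros y (a & b & ha & hab & ->); auto).
  assert (iE : E (RInt f 1 2)) by (exists 1, 2; repeat split; lra).
  destruct (completeness E bE (ex_intro _ _ iE)) as [l [Hub Hlub]].
  exists l. split; [split|split].
  - intros a b ha hab; apply Hex; lra.
  - intros eps he.
    assert (exists y, E y /\ l - eps < y) as (y & (a0 & b0 & ha0 & hab0 & ->) & hy).
    { apply NNPP; intro N. assert (l <= l - eps); [|lra].
      apply Hlub. intros y Ey. apply Rnot_lt_le. intro Hy. apply N. exists y. auto. }
    exists a0, b0. repeat split; auto.
    intros a b ha hb1 hb2.
    assert (RInt f a b <= l) by (apply Hub; exists a, b; repeat split; lra).
    rewrite <- (RInt_Chasles_R f a a0), <- (RInt_Chasles_R f a0 b0 b) in * by (apply Hex; lra).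
    pose proof (Hge a a0 ha hb1). pose proof (Hge b0 b ltac:(lra) hb2).
    rewrite Rabs_left1; lra.
  - apply Rlt_le_trans with (RInt f 1 2); [|apply Hub; auto].
    apply RInt_gt_0; [lra| |]; intros; [apply Hp | apply Hc]; lra.
  - apply Hlub. intros y (a & b & ha & hab & ->). auto.
Qed.

Lemma continuous_exp_lin c x : continuous (fun t => exp (- c * t)) x.
Proof. apply continuous_of_ex_derive. auto_derive. auto. Qed.

Lemma continuous_isqrt_exp c x : 0 < x ->
  continuous (fun t => / sqrt t * exp (- c * t)) x.
Proof.
  intro hx. apply continuous_of_ex_derive. auto_derive.
  pose proof (sqrt_lt_R0 x hx). repeat split; lra.
Qed.

Lemma RInt_exp_le c a b : 0 < c -> 0 < a -> a <= b ->
  RInt (fun t => exp (- c * t)) a b <= / c.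
Proof.
  intros hc ha hab.
  rewrite (RInt_derive_R (fun t => - / c * exp (- c * t))); auto.
  - assert (exp (- c * a) <= 1) by (rewrite <- exp_0; left; apply exp_increasing; nra).
    pose proof (exp_pos (- c * b)). pose proof (Rinv_0_lt_compat c hc). nra.
  - intros x _. auto_derive; auto. field. lra.
  - intros; apply continuous_exp_lin.
Qed.

(* Compare with [1 / (sqrt t (1 + c t))], whose primitive is
   [2 / sqrt c * atan (sqrt (c t))]. *)
Lemma RInt_isqrt_exp_le c a b : 0 < c -> 0 < a -> a <= b ->
  RInt (fun t => / sqrt t * exp (- c * t)) a b <= PI / sqrt c.
Proof.
  intros hc ha hab.
  pose proof (sqrt_lt_R0 c hc) as hsc.
  assert (Hcont : forall x, 0 < x -> continuous (fun t => / sqrt t * / (1 + c * t)) x).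
  { intros x hx. apply continuous_of_ex_derive. auto_derive.
    pose proof (sqrt_lt_R0 x hx). repeat split; nra. }
  apply Rle_trans with (RInt (fun t => / sqrt t * / (1 + c * t)) a b).
  - apply RInt_le; auto; try (apply ex_RInt_pos; try lra; auto).
    + intros; apply continuous_isqrt_exp; auto.
    + intros x hx. pose proof (sqrt_lt_R0 x ltac:(lra)).
      apply Rmult_le_compat_l; [left; apply Rinv_0_lt_compat; auto|].
      pose proof (exp_ineq1_le (c * x)).
      replace (exp (- c * x)) with (/ exp (c * x))
        by (rewrite <- exp_Ropp; f_equal; ring).
      apply Rinv_le_contravar; nra.
  - rewrite (RInt_derive_R (fun t => 2 / sqrt c * atan (sqrt c * sqrt t))); auto.
    + assert (0 <= atan (sqrt c * sqrt a)).
      { rewrite <- atan_0. left. apply atan_increasing.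
        pose proof (sqrt_lt_R0 a ha). nra. }
      pose proof (atan_bound (sqrt c * sqrt b)).
      assert (0 < 2 / sqrt c) by (apply Rdiv_lt_0_compat; lra).
      replace (PI / sqrt c) with (2 / sqrt c * (PI / 2)) by (field; lra).
      nra.
    + intros x hx. pose proof (sqrt_lt_R0 x ltac:(lra)).
      pose proof (sqrt_sqrt c ltac:(lra)). pose proof (sqrt_sqrt x ltac:(lra)).
      auto_derive; [lra|].
      replace (sqrt c * sqrt x * (sqrt c * sqrt x * 1)) with (c * x) by nra.
      R_eq. field. repeat split; nra.
    + intros x hx. apply Hcont. lra.
Qed.

(** * The integral of t^(-1/2) exp (- a t - b / t) *)

Definition gig (a b t : R) : R := / sqrt t * exp (- a * t - b / t).
Definition gauss (y : R) : R := exp (- (y * y)).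
Definition gauss_int (Y : R) : R := RInt gauss 0 Y.
Definition gauss_cs (al be u : R) : R := gauss (al * u - be / u).

Lemma continuous_gauss x : continuous gauss x.
Proof. apply continuous_of_ex_derive. unfold gauss. auto_derive. auto. Qed.

Lemma ex_RInt_gauss a b : ex_RInt gauss a b.
Proof. apply (ex_RInt_continuous (V:=R_CompleteNormedModule)); intros; apply continuous_gauss. Qed.

Lemma continuous_gig a b x : 0 < x -> continuous (gig a b) x.
Proof.
  intro hx. apply continuous_of_ex_derive. unfold gig. auto_derive.
  pose proof (sqrt_lt_R0 x hx). repeat split; lra.
Qed.

Lemma continuous_gauss_cs al be x : 0 < x -> continuous (gauss_cs al be) x.
Proof.
  intro hx. apply continuous_of_ex_derive. unfold gauss_cs, gauss. auto_derive. lra.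
Qed.

Lemma RInt_gig_sqr a b u1 u2 : 0 < u1 -> 0 < u2 ->
  RInt (gig a b) (u1 * u1) (u2 * u2) =
  2 * RInt (fun u => exp (- a * (u * u) - b / (u * u))) u1 u2.
Proof.
  intros h1 h2.
  rewrite <- (RInt_comp_R (gig a b) (fun u => u * u) (fun u => 2 * u)).
  - rewrite <- RInt_scal_R.
    + apply RInt_ext. intros x hx. pose proof (interval_pos u1 u2 x h1 h2 ltac:(lra)).
      unfold gig. rewrite sqrt_square by lra. R_eq. field. lra.
    + apply ex_RInt_pos; auto. intros x hx.
      apply continuous_of_ex_derive; auto_derive. nonzero.
  - intros x hx. apply continuous_gig. pose proof (interval_pos u1 u2 x h1 h2 hx). nra.
  - intros x hx. split.
    + auto_derive; auto. ring.
    + apply continuous_of_ex_derive; auto_derive; auto.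
Qed.

Lemma RInt_gauss_cs_subst al be u1 u2 : 0 < u1 -> 0 < u2 ->
  RInt (fun u => (al + be / (u * u)) * gauss_cs al be u) u1 u2 =
  RInt gauss (al * u1 - be / u1) (al * u2 - be / u2).
Proof.
  intros h1 h2. apply (RInt_comp_R gauss (fun u => al * u - be / u)).
  - intros; apply continuous_gauss.
  - intros x hx. pose proof (interval_pos u1 u2 x h1 h2 hx). split.
    + auto_derive; [lra|]. R_eq. field. lra.
    + apply continuous_of_ex_derive. auto_derive. nonzero.
Qed.

(* The substitution [u = be / (al v)] fixes [gauss_cs al be]. *)
Lemma RInt_gauss_cs_inv al be u1 u2 : 0 < al -> 0 < be -> 0 < u1 -> 0 < u2 ->
  RInt (gauss_cs al be) u1 u2 =
  RInt (fun v => be / (al * (v * v)) * gauss_cs al be v) (be / (al * u2)) (be / (al * u1)).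
Proof.
  intros ha hb h1 h2.
  assert (c1 : 0 < be / (al * u1)) by (apply Rdiv_lt_0_compat; nra).
  assert (c2 : 0 < be / (al * u2)) by (apply Rdiv_lt_0_compat; nra).
  assert (Hinv : forall x, 0 < x -> be / (al * (be / (al * x))) = x) by (intros; field; lra).
  pose proof (RInt_comp_R (gauss_cs al be) (fun v => be / (al * v))
    (fun v => - (be / (al * (v * v)))) (be / (al * u1)) (be / (al * u2))) as Hsub.
  simpl in Hsub. rewrite !Hinv in Hsub by auto. rewrite <- Hsub.
  - assert (Hex : ex_RInt (fun v => be / (al * (v * v)) * gauss_cs al be v)
                     (be / (al * u1)) (be / (al * u2))).
    { apply ex_RInt_pos; auto. intros x hx. apply continuous_of_ex_derive.
      unfold gauss_cs, gauss. auto_derive. nonzero. }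
    rewrite (RInt_swap_R _ _ _ Hex).
    replace (- _) with (-1 * RInt (fun v => be / (al * (v * v)) * gauss_cs al be v)
                               (be / (al * u1)) (be / (al * u2))) by ring.
    rewrite <- RInt_scal_R by exact Hex.
    apply RInt_ext. intros v hv. pose proof (interval_pos _ _ v c1 c2 ltac:(lra)).
    unfold gauss_cs, gauss. R_eq.
    replace (al * (be / (al * v)) - be / (be / (al * v))) with (- (al * v - be / v))
      by (field; lra).
    rewrite Rmult_opp_opp. ring.
  - intros x hx. apply continuous_gauss_cs, Rdiv_lt_0_compat;
      pose proof (interval_pos _ _ x c1 c2 hx); nra.
  - intros x hx. pose proof (interval_pos _ _ x c1 c2 hx). split.
    + auto_derive; [nonzero|]. R_eq. field. lra.
    + apply continuous_of_ex_derive. auto_derive. nonzero.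
Qed.

Lemma RInt_gauss_sym Y : RInt gauss (- Y) Y = 2 * gauss_int Y.
Proof.
  unfold gauss_int. rewrite <- (RInt_Chasles_R gauss (- Y) 0 Y) by apply ex_RInt_gauss.
  enough (RInt gauss (- Y) 0 = RInt gauss 0 Y) by lra.
  pose proof (RInt_comp_R gauss (fun z => - z) (fun _ => -1) Y 0) as Hsub.
  simpl in Hsub. rewrite Ropp_0 in Hsub. rewrite <- Hsub.
  - rewrite (RInt_ext _ (fun z => -1 * gauss z)).
    + rewrite RInt_scal_R, (RInt_swap_R gauss 0 Y) by apply ex_RInt_gauss. R_eq. ring.
    + intros. unfold gauss. rewrite Rmult_opp_opp. reflexivity.
  - intros; apply continuous_gauss.
  - intros. split; [auto_derive; auto|apply continuous_const].
Qed.

Lemma gauss_int_bounds x : 0 <= x -> 0 <= gauss_int x <= x.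
Proof.
  intro hx. unfold gauss_int. split.
  - apply RInt_ge_0; auto; [apply ex_RInt_gauss|].
    intros; unfold gauss; left; apply exp_pos.
  - assert (Hx : RInt (fun _ => 1) 0 x = x)
      by (rewrite RInt_const; change ((x - 0) * 1 = x); ring).
    rewrite <- Hx at 2.
    apply RInt_le; auto; [apply ex_RInt_gauss|apply ex_RInt_const|].
    intros t ht. unfold gauss. rewrite <- exp_0.
    left; apply exp_increasing. nra.
Qed.

Lemma RInt_gig_0 a u1 u2 : 0 < a -> 0 < u1 -> 0 < u2 ->
  RInt (gig a 0) (u1 * u1) (u2 * u2) =
  2 / sqrt a * (gauss_int (sqrt a * u2) - gauss_int (sqrt a * u1)).
Proof.
  intros ha h1 h2. pose proof (sqrt_lt_R0 a ha) as hs.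
  assert (Ha : a = sqrt a * sqrt a) by (symmetry; apply sqrt_sqrt; lra).
  rewrite RInt_gig_sqr by auto.
  rewrite (RInt_ext _ (fun u => / sqrt a * ((sqrt a + 0 / (u * u)) * gauss_cs (sqrt a) 0 u))).
  2:{ intros x hx. pose proof (interval_pos u1 u2 x h1 h2 ltac:(lra)).
      unfold gauss_cs, gauss. R_eq.
      assert (- a * (x * x) - 0 / (x * x) = - ((sqrt a * x - 0 / x) * (sqrt a * x - 0 / x)))
        as -> by (rewrite Ha at 1; field; lra).
      field. lra. }
  rewrite RInt_scal_R, RInt_gauss_cs_subst by
    (auto; apply ex_RInt_pos; auto; intros; apply continuous_of_ex_derive;
     unfold gauss_cs, gauss; auto_derive; nonzero).
  unfold gauss_int. rewrite <- (RInt_Chasles_R gauss 0 (sqrt a * u1)) by apply ex_RInt_gauss.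
  unfold Rdiv. rewrite !Rmult_0_l, !Rminus_0_r. R_eq. ring.
Qed.

(* Cauchy-Schlomilch, with [al = sqrt a], [be = sqrt b], [u1 = be / (al R)]: the
   inversion [u = be / (al v)] maps [[u1, R]] onto itself, so the integral [J] of
   [gauss_cs al be] over it satisfies [2 al J = RInt gauss (- Y) Y], [Y = al R - be / R]. *)
Lemma RInt_gig_sym a b R : 0 < a -> 0 < b -> 0 < R ->
  RInt (gig a b) (sqrt b / (sqrt a * R) * (sqrt b / (sqrt a * R))) (R * R) =
  2 * exp (- 2 * (sqrt a * sqrt b)) / sqrt a * gauss_int (sqrt a * R - sqrt b / R).
Proof.
  intros ha hb hR. pose proof (sqrt_lt_R0 a ha) as hsa. pose proof (sqrt_lt_R0 b hb) as hsb.
  assert (Ea : a = sqrt a * sqrt a) by (symmetry; apply sqrt_sqrt; lra).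
  assert (Eb : b = sqrt b * sqrt b) by (symmetry; apply sqrt_sqrt; lra).
  set (al := sqrt a) in *. set (be := sqrt b) in *.
  set (u1 := be / (al * R)).
  assert (hu1 : 0 < u1) by (apply Rdiv_lt_0_compat; nra).
  assert (Hex0 : ex_RInt (gauss_cs al be) u1 R)
    by (apply ex_RInt_pos; auto; intros; apply continuous_gauss_cs; auto).
  assert (Hex1 : ex_RInt (fun v => be / (al * (v * v)) * gauss_cs al be v) u1 R).
  { apply ex_RInt_pos; auto. intros x hx. apply continuous_of_ex_derive.
    unfold gauss_cs, gauss. auto_derive. nonzero. }
  rewrite RInt_gig_sqr by auto.
  rewrite (RInt_ext _ (fun u => exp (- 2 * (al * be)) * gauss_cs al be u)).
  2:{ intros x hx. pose proof (interval_pos u1 R x hu1 hR ltac:(lra)).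
      unfold gauss_cs, gauss. R_eq. rewrite <- exp_plus. f_equal. rewrite Ea, Eb. field. lra. }
  rewrite RInt_scal_R by exact Hex0.
  assert (HJ : RInt (gauss_cs al be) u1 R =
               RInt (fun v => be / (al * (v * v)) * gauss_cs al be v) u1 R).
  { rewrite RInt_gauss_cs_inv by auto. f_equal; unfold u1; field; lra. }
  pose proof (RInt_gauss_cs_subst al be u1 R hu1 hR) as Hsubst.
  rewrite (RInt_ext _ (fun u => al * gauss_cs al be u
                               + al * (be / (al * (u * u)) * gauss_cs al be u))) in Hsubst.
  2:{ intros x hx. pose proof (interval_pos u1 R x hu1 hR ltac:(lra)). R_eq. field. lra. }
  rewrite RInt_plus_R, !RInt_scal_R, <- HJ in Hsubst by (auto; apply ex_RInt_scal_R; auto).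
  replace (al * u1 - be / u1) with (- (al * R - be / R)) in Hsubst by (unfold u1; field; lra).
  rewrite RInt_gauss_sym in Hsubst.
  apply (Rmult_eq_reg_l al); [|lra].
  transitivity (exp (- 2 * (al * be)) *
    (al * RInt (gauss_cs al be) u1 R + al * RInt (gauss_cs al be) u1 R)); [ring|].
  rewrite Hsubst. field. lra.
Qed.

Lemma gig_0_limit a L0 : 0 < a -> is_ImpRInt (gig a 0) L0 ->
  forall eps, 0 < eps -> exists Y0, forall Y, Y0 <= Y ->
    Rabs (2 / sqrt a * gauss_int Y - L0) <= eps.
Proof.
  intros ha [_ Hlim] eps he.
  pose proof (sqrt_lt_R0 a ha) as hs.
  destruct (Hlim (eps / 2)) as (a0 & b0 & h0 & h1 & h2); [lra|].
  pose proof (sqrt_pos b0).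
  exists (sqrt a * (sqrt b0 + 1)). intros Y hY.
  set (u2 := Y / sqrt a).
  assert (hu2 : sqrt b0 + 1 <= u2).
  { unfold u2. apply (Rmult_le_reg_l (sqrt a)); auto. field_simplify; lra. }
  set (u1 := Rmin (sqrt a0) (eps / 4)).
  assert (hu1 : 0 < u1) by (apply Rmin_pos; [apply sqrt_lt_R0|]; lra).
  assert (u1 <= sqrt a0) by apply Rmin_l. assert (u1 <= eps / 4) by apply Rmin_r.
  pose proof (sqrt_sqrt a0 ltac:(lra)). pose proof (sqrt_sqrt b0 ltac:(lra)).
  specialize (h2 (u1 * u1) (u2 * u2) ltac:(nra) ltac:(nra) ltac:(nra)).
  rewrite RInt_gig_0 in h2 by (auto; lra).
  replace (sqrt a * u2) with Y in h2 by (unfold u2; field; lra).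
  pose proof (gauss_int_bounds (sqrt a * u1) ltac:(nra)).
  assert (0 <= 2 / sqrt a * gauss_int (sqrt a * u1) <= eps / 2).
  { assert (0 < 2 / sqrt a) by (apply Rdiv_lt_0_compat; lra).
    split; [nra|].
    apply Rle_trans with (2 / sqrt a * (sqrt a * u1)); [nra|].
    replace (2 / sqrt a * (sqrt a * u1)) with (2 * u1) by (field; lra). lra. }
  replace (2 / sqrt a * gauss_int Y - L0) with
    ((2 / sqrt a * (gauss_int Y - gauss_int (sqrt a * u1)) - L0)
     + 2 / sqrt a * gauss_int (sqrt a * u1)) by ring.
  eapply Rle_trans; [apply Rabs_triang|].
  rewrite (Rabs_right (2 / sqrt a * _)) by lra. lra.
Qed.

Lemma gig_window a b a1 b1 Y0 : 0 < a -> 0 < b -> 0 < a1 ->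
  exists R, 0 < R /\
    sqrt b / (sqrt a * R) * (sqrt b / (sqrt a * R)) <= a1 /\ b1 <= R * R /\
    Y0 <= sqrt a * R - sqrt b / R.
Proof.
  intros ha hb ha1.
  pose proof (sqrt_lt_R0 a ha) as hsa. pose proof (sqrt_lt_R0 b hb) as hsb.
  pose proof (Rabs_pos Y0). pose proof (Rabs_pos b1).
  assert (q1 : 0 <= b / (a * a1)) by (left; apply Rdiv_lt_0_compat; nra).
  assert (q2 : 0 <= Rabs Y0 + sqrt b) by lra.
  set (R := 1 + b / (a * a1) + (Rabs Y0 + sqrt b) / sqrt a + Rabs b1).
  assert (q3 : 0 <= (Rabs Y0 + sqrt b) / sqrt a) by (apply Rmult_le_pos; [lra|left; apply Rinv_0_lt_compat; lra]).
  assert (hR : 1 <= R) by (unfold R; lra).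
  assert (hRR : R <= R * R) by nra.
  exists R. repeat split; [lra| | |].
  - replace (sqrt b / (sqrt a * R) * (sqrt b / (sqrt a * R)))
      with ((sqrt b * sqrt b) / ((sqrt a * sqrt a) * (R * R))) by (field; lra).
    rewrite !sqrt_sqrt by lra.
    assert (Hb : b / (a * a1) <= R) by (unfold R; lra).
    apply (Rmult_le_compat_l (a * a1)) in Hb; [|nra].
    replace (a * a1 * (b / (a * a1))) with b in Hb by (field; lra).
    assert (haR : 0 < a * (R * R)) by (apply Rmult_lt_0_compat; nra).
    apply (Rmult_le_reg_r (a * (R * R))); [lra|].
    unfold Rdiv. rewrite Rmult_assoc, Rinv_l, Rmult_1_r by lra.
    assert (0 <= a * a1) by nra. nra.
  - pose proof (Rle_abs b1). assert (Rabs b1 <= R) by (unfold R; lra). nra.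
  - assert (sqrt b / R <= sqrt b) by (apply (Rmult_le_reg_l R); [lra|]; field_simplify; nra).
    assert (HY : (Rabs Y0 + sqrt b) / sqrt a <= R) by (unfold R; lra).
    apply (Rmult_le_compat_l (sqrt a)) in HY; [|lra].
    replace (sqrt a * ((Rabs Y0 + sqrt b) / sqrt a)) with (Rabs Y0 + sqrt b)
      in HY by (field; lra).
    pose proof (Rle_abs Y0). lra.
Qed.

Lemma is_ImpRInt_gig_value a b L0 Lb : 0 < a -> 0 <= b ->
  is_ImpRInt (gig a 0) L0 -> is_ImpRInt (gig a b) Lb ->
  Lb = exp (- 2 * (sqrt a * sqrt b)) * L0.
Proof.
  intros ha hb H0 Hb.
  destruct (Req_dec b 0) as [->|nb].
  { rewrite sqrt_0, !Rmult_0_r, exp_0, Rmult_1_l. exact (is_ImpRInt_unique _ _ _ Hb H0). }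
  assert (hb' : 0 < b) by lra.
  pose proof (sqrt_lt_R0 a ha) as hsa.
  set (e := exp (- 2 * (sqrt a * sqrt b))).
  assert (he : 0 < e <= 1).
  { split; [apply exp_pos|]. rewrite <- exp_0. left. apply exp_increasing.
    pose proof (sqrt_lt_R0 b hb'). nra. }
  apply Rminus_diag_uniq, Rabs_eq_0, Rle_antisym; [|apply Rabs_pos].
  apply le_epsilon. intros eps heps.
  destruct (gig_0_limit a L0 ha H0 (eps / 2)) as (Y0 & HY0); [lra|].
  destruct Hb as [_ Hlim]. destruct (Hlim (eps / 2)) as (a1 & b1 & h1 & _ & Hwin); [lra|].
  destruct (gig_window a b a1 b1 Y0) as (R & hR & Ha1 & Hb1 & HY); auto.
  specialize (HY0 _ HY).
  assert (hu : 0 < sqrt b / (sqrt a * R))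
    by (apply Rdiv_lt_0_compat; [apply sqrt_lt_R0; lra|nra]).
  specialize (Hwin _ _ (Rmult_lt_0_compat _ _ hu hu) Ha1 Hb1).
  rewrite RInt_gig_sym in Hwin by auto. fold e in Hwin.
  set (G := 2 / sqrt a * gauss_int (sqrt a * R - sqrt b / R)) in *.
  replace (2 * e / sqrt a * gauss_int (sqrt a * R - sqrt b / R)) with (e * G) in Hwin
    by (unfold G; field; lra).
  replace (Lb - e * L0) with (- (e * G - Lb) + e * (G - L0)) by ring.
  eapply Rle_trans; [apply Rabs_triang|].
  rewrite Rabs_Ropp, Rabs_mult, (Rabs_right e) by lra.
  pose proof (Rabs_pos (G - L0)). nra.
Qed.

Lemma ex_ImpRInt_gig a b : 0 < a -> 0 <= b -> exists L, is_ImpRInt (gig a b) L /\ 0 < L.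
Proof.
  intros ha hb.
  assert (Hle : forall t, 0 < t -> 0 < gig a b t <= / sqrt t * exp (- a * t)).
  { intros t ht. unfold gig. pose proof (Rinv_0_lt_compat _ (sqrt_lt_R0 t ht)) as hs.
    split; [apply Rmult_lt_0_compat; auto; apply exp_pos|].
    apply Rmult_le_compat_l; [lra|].
    assert (hbt : 0 <= b / t) by (apply Rmult_le_pos; [lra|left; apply Rinv_0_lt_compat; lra]).
    destruct (Rle_lt_or_eq_dec _ _ hbt) as [hlt|<-].
    - left. apply exp_increasing. lra.
    - right. f_equal. ring. }
  destruct (ex_ImpRInt_pos_bounded (gig a b) (PI / sqrt a)) as (L & HL & hL & _).
  - intros; apply continuous_gig; auto.
  - intros; apply Hle; auto.
  - intros a0 b0 ha0 hab. eapply Rle_trans; [|apply (RInt_isqrt_exp_le a a0 b0); auto].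
    apply RInt_le; auto; try (apply ex_RInt_pos; try lra).
    + intros; apply continuous_gig; auto.
    + intros; apply continuous_isqrt_exp; auto.
    + intros x hx. apply Hle; lra.
  - exists L. auto.
Qed.

Lemma is_ImpRInt_gig a : 0 < a -> exists K, 0 < K /\
  forall b, 0 <= b -> is_ImpRInt (gig a b) (exp (- 2 * (sqrt a * sqrt b)) * K).
Proof.
  intros ha. destruct (ex_ImpRInt_gig a 0 ha (Rle_refl _)) as (K & HK & hK).
  exists K. split; auto. intros b hb.
  destruct (ex_ImpRInt_gig a b ha hb) as (L & HL & _).
  rewrite <- (is_ImpRInt_gig_value a b K L); auto.
Qed.

(** * The integral over one local variance *)

Definition tau_kernel (c g t : R) : R := sqrt (g / (g + t)) * exp (- c * t).

Lemma continuous_tau_kernel c g t : 0 < g -> 0 < t -> continuous (tau_kernel c g) t.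
Proof.
  intros hg ht. apply continuous_of_ex_derive. unfold tau_kernel. auto_derive.
  repeat split; try (apply Rdiv_lt_0_compat; lra); lra.
Qed.

Lemma tau_kernel_bounds c g t : 0 < g -> 0 < t -> 0 < tau_kernel c g t <= exp (- c * t).
Proof.
  intros hg ht. unfold tau_kernel. pose proof (exp_pos (- c * t)).
  assert (hq : 0 < g / (g + t)) by (apply Rdiv_lt_0_compat; lra).
  assert (g / (g + t) <= 1) by (apply (Rmult_le_reg_r (g + t)); [lra|]; field_simplify; lra).
  pose proof (sqrt_lt_R0 _ hq).
  assert (sqrt (g / (g + t)) <= 1) by (rewrite <- sqrt_1; apply sqrt_le_1_alt; auto).
  split; [apply Rmult_lt_0_compat|]; nra.
Qed.

Definition tau_int (c g : R) : R := epsilon (inhabits 0) (is_ImpRInt (tau_kernel c g)).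

Lemma tau_int_spec c g : 0 < c -> 0 < g ->
  is_ImpRInt (tau_kernel c g) (tau_int c g) /\ 0 < tau_int c g <= / c.
Proof.
  intros hc hg.
  destruct (ex_ImpRInt_pos_bounded (tau_kernel c g) (/ c)) as (l & Hl & hl).
  - intros; apply continuous_tau_kernel; auto.
  - intros; apply tau_kernel_bounds; auto.
  - intros a b ha hab. eapply Rle_trans; [|apply (RInt_exp_le c a b); auto].
    apply RInt_le; auto; try (apply ex_RInt_pos; try lra).
    + intros; apply continuous_tau_kernel; auto.
    + intros; apply continuous_exp_lin.
    + intros x hx. apply tau_kernel_bounds; lra.
  - assert (Hspec : is_ImpRInt (tau_kernel c g) (tau_int c g))
      by (unfold tau_int; apply epsilon_spec; exists l; auto).
    rewrite (is_ImpRInt_unique _ _ _ Hspec Hl). auto.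
Qed.

Lemma Rabs_sqrt_minus_le x y : 0 <= x -> 0 <= y ->
  Rabs (sqrt x - sqrt y) <= sqrt (Rabs (x - y)).
Proof.
  assert (Hle : forall x y, 0 <= y -> y <= x -> sqrt x - sqrt y <= sqrt (x - y)).
  { intros u v hv hvu.
    pose proof (sqrt_sqrt u ltac:(lra)). pose proof (sqrt_sqrt v hv).
    pose proof (sqrt_sqrt (u - v) ltac:(lra)). pose proof (sqrt_pos (u - v)).
    pose proof (sqrt_pos v). pose proof (sqrt_le_1_alt v u hvu). nra. }
  intros hx hy. destruct (Rle_dec y x).
  - rewrite !Rabs_right; [apply Hle; auto|lra|].
    pose proof (sqrt_le_1_alt y x r). lra.
  - pose proof (sqrt_le_1_alt x y ltac:(lra)).
    rewrite <- Rabs_Ropp, (Rabs_left1 (x - y)), !Rabs_right by lra.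
    replace (- (sqrt x - sqrt y)) with (sqrt y - sqrt x) by ring.
    replace (- (x - y)) with (y - x) by ring. apply Hle; lra.
Qed.

Lemma Rabs_frac_minus_le g g0 t : 0 < g -> 0 < g0 -> 0 < t ->
  Rabs (g / (g + t) - g0 / (g0 + t)) <= Rabs (g - g0) / g0.
Proof.
  intros hg hg0 ht.
  replace (g / (g + t) - g0 / (g0 + t)) with ((g - g0) * (t / (g + t) * / (g0 + t)))
    by (field; lra).
  rewrite Rabs_mult, (Rabs_right (_ * _)).
  2:{ left. apply Rmult_lt_0_compat; [apply Rdiv_lt_0_compat|apply Rinv_0_lt_compat]; lra. }
  apply Rmult_le_compat_l; [apply Rabs_pos|].
  assert (0 <= t / (g + t) <= 1).
  { split; [left; apply Rdiv_lt_0_compat; lra|].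
    apply (Rmult_le_reg_r (g + t)); [lra|]. field_simplify; lra. }
  assert (0 < / (g0 + t) <= / g0)
    by (split; [apply Rinv_0_lt_compat|apply Rinv_le_contravar]; lra).
  nra.
Qed.

Lemma Rabs_tau_int_minus_le c g g0 : 0 < c -> 0 < g -> 0 < g0 ->
  Rabs (tau_int c g - tau_int c g0) <= sqrt (Rabs (g - g0) / g0) * / c.
Proof.
  intros hc hg hg0.
  destruct (tau_int_spec c g hc hg) as [H1 _]. destruct (tau_int_spec c g0 hc hg0) as [H2 _].
  set (k := sqrt (Rabs (g - g0) / g0)).
  assert (hk : 0 <= k) by apply sqrt_pos.
  apply (is_ImpRInt_abs_le _ _ _ (is_ImpRInt_minus _ _ _ _ H1 H2)). intros a b ha hab.
  assert (Hpt : forall x, 0 < x ->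
            Rabs (tau_kernel c g x - tau_kernel c g0 x) <= k * exp (- c * x)).
  { intros x hx. unfold tau_kernel. rewrite <- Rmult_minus_distr_r, Rabs_mult.
    rewrite (Rabs_right (exp _)) by (left; apply exp_pos).
    apply Rmult_le_compat_r; [left; apply exp_pos|].
    eapply Rle_trans; [apply Rabs_sqrt_minus_le; left; apply Rdiv_lt_0_compat; lra|].
    apply sqrt_le_1_alt, Rabs_frac_minus_le; auto. }
  assert (Hcont : forall x, 0 < x -> continuous (fun x => tau_kernel c g x - tau_kernel c g0 x) x).
  { intros x hx. apply (continuous_minus (tau_kernel c g)); apply continuous_tau_kernel; auto. }
  assert (Hexp : ex_RInt (fun t => exp (- c * t)) a b)
    by (apply ex_RInt_pos; try lra; intros; apply continuous_exp_lin).
  eapply Rle_trans; [apply abs_RInt_le; auto; apply ex_RInt_pos; auto; lra|].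
  apply Rle_trans with (RInt (fun x => k * exp (- c * x)) a b).
  - apply RInt_le; auto.
    + apply ex_RInt_pos; try lra. intros x hx. apply continuous_Rabs_comp. auto.
    + apply ex_RInt_scal_R; auto.
    + intros x hx. apply Hpt. lra.
  - rewrite RInt_scal_R by auto. apply Rmult_le_compat_l; auto. apply RInt_exp_le; auto.
Qed.

Lemma continuous_tau_int c g0 : 0 < c -> 0 < g0 -> continuous (tau_int c) g0.
Proof.
  intros hc hg0. apply continuity_pt_filterlim.
  intros eps he.
  set (d := Rmin g0 (g0 * (eps * c / 2) ^ 2)).
  assert (hd : 0 < d) by (apply Rmin_pos; auto; apply Rmult_lt_0_compat; auto; apply pow_lt; nra).
  exists d. split; auto.
  intros g [_ hg]. simpl in hg. unfold R_dist in *.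
  assert (d <= g0) by apply Rmin_l. assert (d <= g0 * (eps * c / 2) ^ 2) by apply Rmin_r.
  assert (0 < g) by (apply Rabs_def2 in hg; lra).
  eapply Rle_lt_trans; [apply Rabs_tau_int_minus_le; auto|].
  assert (sqrt (Rabs (g - g0) / g0) < eps * c).
  { apply Rle_lt_trans with (sqrt ((eps * c / 2) ^ 2)).
    - apply sqrt_le_1_alt. apply (Rmult_le_reg_r g0); auto. field_simplify; lra.
    - rewrite sqrt_pow2 by nra. nra. }
  apply (Rmult_lt_reg_r c); auto. rewrite Rmult_assoc, Rinv_l by lra. lra.
Qed.

(** * Finite products and iterated integrals *)

Lemma prodR_ext m f g : (forall j, (j < m)%nat -> f j = g j) -> prodR m f = prodR m g.
Proof. induction m; simpl; intros H; auto. rewrite IHm, H; auto. Qed.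

Lemma sumR_ext m f g : (forall j, (j < m)%nat -> f j = g j) -> sumR m f = sumR m g.
Proof. induction m; simpl; intros H; auto. rewrite IHm, H; auto. Qed.

Lemma prodR_S_l n f : prodR (S n) f = f 0%nat * prodR n (fun j => f (S j)).
Proof. induction n as [|n IH]; simpl in *; [ring|]. rewrite IH. ring. Qed.

Lemma prodR_mult m f g : prodR m (fun j => f j * g j) = prodR m f * prodR m g.
Proof. induction m; simpl; [ring|]. rewrite IHm. ring. Qed.

Lemma prodR_const m x : prodR m (fun _ => x) = x ^ m.
Proof. induction m; simpl; [ring|]. rewrite IHm. ring. Qed.

Lemma prodR_exp m f : prodR m (fun j => exp (f j)) = exp (sumR m f).
Proof. induction m; simpl; [rewrite exp_0; auto|]. rewrite IHm, exp_plus. ring. Qed.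

Lemma sumR_scal m k f : sumR m (fun j => k * f j) = k * sumR m f.
Proof. induction m; simpl; [ring|]. rewrite IHm. ring. Qed.

Lemma sumR_nonneg m f : (forall j, 0 <= f j) -> 0 <= sumR m f.
Proof. induction m; simpl; intros H; [lra|]. pose proof (H m). pose proof (IHm H). lra. Qed.

Lemma nth_pos xs j : Forall (fun x => 0 < x) xs -> (j < length xs)%nat -> 0 < nth j xs 0.
Proof. intros HF hj. rewrite Forall_forall in HF. apply HF, nth_In. auto. Qed.

Lemma IterInt_ext k : forall F F' l, IterInt k F l ->
  (forall xs, length xs = k -> Forall (fun x => 0 < x) xs -> F xs = F' xs) ->
  IterInt k F' l.
Proof.
  induction k as [|k IH]; simpl; intros F F' l H E.
  - rewrite H. apply E; auto.
  - destruct H as (G & HG & HI). exists G. split; auto.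
    intros t ht. apply (IH _ _ _ (HI t ht)). intros xs hl hf. apply E; simpl; auto.
Qed.

Lemma IterInt_prod n : forall (fs : nat -> R -> R) (ls : nat -> R) c,
  (forall j, is_ImpRInt (fs j) (ls j)) ->
  IterInt n (fun xs => c * prodR n (fun j => fs j (nth j xs 0))) (c * prodR n ls).
Proof.
  induction n as [|n IH]; intros fs ls c H; [reflexivity|].
  exists (fun t => (c * fs 0%nat t) * prodR n (fun j => ls (S j))). split.
  - apply is_ImpRInt_ImpInt.
    apply (is_ImpRInt_ext (fun t => (c * prodR n (fun j => ls (S j))) * fs 0%nat t));
      [intros; ring|].
    rewrite prodR_S_l.
    replace (c * (ls 0%nat * prodR n (fun j => ls (S j))))
      with ((c * prodR n (fun j => ls (S j))) * ls 0%nat) by ring.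
    apply is_ImpRInt_scal, H.
  - intros t ht.
    apply (IterInt_ext n (fun xs => (c * fs 0%nat t) *
                                    prodR n (fun j => fs (S j) (nth j xs 0)))).
    + apply (IH (fun j => fs (S j)) (fun j => ls (S j))). auto.
    + intros xs _ _. rewrite prodR_S_l. simpl. ring.
Qed.

(** * Factorization of the integrands *)

Lemma isqrt_vdiag t u : 0 < t -> 0 < u -> / sqrt u * / sqrt (/ u + / t) = sqrt (t / (t + u)).
Proof.
  intros ht hu.
  replace (/ u + / t) with ((t + u) / (u * t)) by (field; lra).
  rewrite !sqrt_div_alt, sqrt_mult_alt by nra.
  pose proof (sqrt_lt_R0 t ht). pose proof (sqrt_lt_R0 u hu).
  assert (0 < sqrt (t + u)) by (apply sqrt_lt_R0; lra).
  field. lra.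
Qed.

(* Completing the square in [1 / vdiag = 1 / u + 1 / t]: the Gaussian factor of
   coordinate [u = tau^2] contributes [exp (- bt^2 / (2 s2 t))] to the [gamma^2 = t]
   integrand and turns [tau_kernel] into [gig]. *)
Lemma normal_tau_kernel s2 c bt t u : 0 < s2 -> 0 < t -> 0 < u ->
  / sqrt (2 * PI * s2 * / (/ u + / t)) * exp (- (bt ^ 2) / (2 * s2 * / (/ u + / t)))
  * tau_kernel c t u
  = / sqrt (2 * PI * s2) * exp (- / t * (bt ^ 2 / (2 * s2))) * gig c (bt ^ 2 / (2 * s2)) u.
Proof.
  intros hs ht hu. unfold tau_kernel, gig. rewrite <- (isqrt_vdiag t u) by auto.
  assert (hw : 0 < / u + / t)
    by (pose proof (Rinv_0_lt_compat u hu); pose proof (Rinv_0_lt_compat t ht); lra).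
  set (w := / u + / t) in *.
  pose proof PI_RGT_0.
  assert (hps : 0 < 2 * PI * s2) by nra.
  rewrite sqrt_mult_alt, sqrt_inv by lra.
  replace (- (bt ^ 2) / (2 * s2 * / w))
    with (- / t * (bt ^ 2 / (2 * s2)) + - (bt ^ 2 / (2 * s2)) / u)
    by (unfold w; field; repeat split; lra).
  replace (- c * u - bt ^ 2 / (2 * s2) / u) with (- (bt ^ 2 / (2 * s2)) / u + - c * u)
    by (field; lra).
  rewrite !exp_plus.
  pose proof (sqrt_lt_R0 _ hps). pose proof (sqrt_lt_R0 _ hw). pose proof (sqrt_lt_R0 _ hu).
  field. repeat split; lra.
Qed.

Lemma prior_unnorm_cons m l1 l2 t xs : 0 < t -> length xs = m ->
  Forall (fun x => 0 < x) xs ->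
  prior_unnorm m l1 l2 (t :: xs) =
  (/ sqrt t * exp (- (l2 ^ 2 / 2) * t)) *
  prodR m (fun j => tau_kernel (l1 ^ 2 / 2) t (nth j xs 0)).
Proof.
  intros ht hl hf. unfold prior_unnorm, tau2, gam2. cbn [nth].
  rewrite (prodR_ext m (fun j => tau_kernel (l1 ^ 2 / 2) t (nth j xs 0))
    (fun j => (/ sqrt (nth j xs 0) * / sqrt (/ nth j xs 0 + / t))
              * exp (- (l1 ^ 2 / 2) * nth j xs 0))).
  - rewrite (prodR_mult m (fun j => / sqrt (nth j xs 0) * / sqrt (/ nth j xs 0 + / t))),
      prodR_exp, sumR_scal.
    replace (- (l1 ^ 2 / 2) * sumR m (fun j => nth j xs 0) - l2 ^ 2 / 2 * t)
      with (- (l1 ^ 2 / 2) * sumR m (fun j => nth j xs 0) + - (l2 ^ 2 / 2) * t) by ring.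
    rewrite exp_plus. ring.
  - intros j hj. unfold tau_kernel. rewrite isqrt_vdiag; auto.
    apply nth_pos; auto. rewrite hl; exact hj.
Qed.

Lemma marginal_integrand_cons m sigma l1 l2 beta k t xs :
  0 < sigma -> 0 < t -> length xs = m -> Forall (fun x => 0 < x) xs ->
  normal_dens m sigma beta (t :: xs) * (k * prior_unnorm m l1 l2 (t :: xs)) =
  (k * (/ sqrt (2 * PI * sigma ^ 2)) ^ m *
     gig (l2 ^ 2 / 2) (sumR m (fun j => beta j ^ 2 / (2 * sigma ^ 2))) t) *
  prodR m (fun j => gig (l1 ^ 2 / 2) (beta j ^ 2 / (2 * sigma ^ 2)) (nth j xs 0)).
Proof.
  intros hs ht hl hf.
  rewrite prior_unnorm_cons by auto.
  unfold normal_dens, vdiag, tau2, gam2. cbn [nth].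
  set (B := sumR m (fun j => beta j ^ 2 / (2 * sigma ^ 2))).
  assert (Hgig : gig (l2 ^ 2 / 2) B t
                 = / sqrt t * exp (- (l2 ^ 2 / 2) * t) * exp (- / t * B)).
  { unfold gig. rewrite Rmult_assoc, <- exp_plus. f_equal. f_equal. field. lra. }
  rewrite Hgig.
  transitivity (k * (/ sqrt t * exp (- (l2 ^ 2 / 2) * t)) * prodR m (fun j =>
    / sqrt (2 * PI * sigma ^ 2 * / (/ nth j xs 0 + / t)) *
    exp (- beta j ^ 2 / (2 * sigma ^ 2 * / (/ nth j xs 0 + / t))) *
    tau_kernel (l1 ^ 2 / 2) t (nth j xs 0))).
  { rewrite (prodR_mult m _ (fun j => tau_kernel (l1 ^ 2 / 2) t (nth j xs 0))). ring. }
  rewrite (prodR_ext m _ (fun j => / sqrt (2 * PI * sigma ^ 2) *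
    exp (- / t * (beta j ^ 2 / (2 * sigma ^ 2))) *
    gig (l1 ^ 2 / 2) (beta j ^ 2 / (2 * sigma ^ 2)) (nth j xs 0))).
  2:{ intros j hj. apply normal_tau_kernel; auto; [apply pow_lt; auto|].
      apply nth_pos; [auto|rewrite hl; exact hj]. }
  rewrite !prodR_mult, prodR_const, prodR_exp. unfold B. rewrite sumR_scal. ring.
Qed.

Lemma prior_unnorm_integrable m l1 l2 : 0 < l1 -> 0 < l2 ->
  exists Z, 0 < Z /\ IterInt (S m) (prior_unnorm m l1 l2) Z.
Proof.
  intros hl1 hl2.
  set (c1 := l1 ^ 2 / 2). set (c2 := l2 ^ 2 / 2).
  assert (hc1 : 0 < c1) by (unfold c1; apply Rdiv_lt_0_compat; [apply pow_lt|]; lra).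
  assert (hc2 : 0 < c2) by (unfold c2; apply Rdiv_lt_0_compat; [apply pow_lt|]; lra).
  set (G := fun t => / sqrt t * exp (- c2 * t) * tau_int c1 t ^ m).
  assert (HG : forall t, 0 < t ->
            0 < G t <= (/ c1) ^ m * (/ sqrt t * exp (- c2 * t))).
  { intros t ht. destruct (tau_int_spec c1 t hc1 ht) as [_ [h1 h2]].
    assert (0 < / sqrt t * exp (- c2 * t))
      by (apply Rmult_lt_0_compat; [apply Rinv_0_lt_compat, sqrt_lt_R0|apply exp_pos]; lra).
    unfold G. split; [apply Rmult_lt_0_compat; [|apply pow_lt]; lra|].
    rewrite Rmult_comm. apply Rmult_le_compat_r; [lra|]. apply pow_incr. lra. }
  assert (Hcont : forall t, 0 < t -> continuous G t).
  { intros t ht. apply (continuous_mult (fun t => / sqrt t * exp (- c2 * t))).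
    - apply continuous_isqrt_exp; auto.
    - apply (continuous_comp (tau_int c1) (fun y => y ^ m)).
      + apply continuous_tau_int; auto.
      + apply continuous_of_ex_derive. auto_derive. auto. }
  destruct (ex_ImpRInt_pos_bounded G ((/ c1) ^ m * (PI / sqrt c2))) as (Z & HZ & hZ & _).
  - exact Hcont.
  - intros; apply HG; auto.
  - intros a b ha hab.
    assert (Hex : ex_RInt (fun t => / sqrt t * exp (- c2 * t)) a b)
      by (apply ex_RInt_pos; try lra; intros; apply continuous_isqrt_exp; auto).
    apply Rle_trans with (RInt (fun t => (/ c1) ^ m * (/ sqrt t * exp (- c2 * t))) a b).
    + apply RInt_le; auto.
      * apply ex_RInt_pos; auto; lra.
      * apply ex_RInt_scal_R; auto.
      * intros x hx. apply HG. lra.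
    + rewrite RInt_scal_R by auto.
      apply Rmult_le_compat_l; [apply pow_le; left; apply Rinv_0_lt_compat; auto|].
      apply RInt_isqrt_exp_le; auto.
  - exists Z. split; auto. exists G. split; [apply is_ImpRInt_ImpInt; auto|].
    intros t ht. destruct (tau_int_spec c1 t hc1 ht) as [Ht _].
    pose proof (IterInt_prod m (fun _ => tau_kernel c1 t) (fun _ => tau_int c1 t)
                  (/ sqrt t * exp (- c2 * t)) (fun _ => Ht)) as HI.
    rewrite prodR_const in HI.
    apply (IterInt_ext m _ _ _ HI). intros xs hl hf.
    rewrite prior_unnorm_cons by auto. reflexivity.
Qed.

Lemma gig_decay_rate l sigma y : 0 < l -> 0 < sigma -> 0 <= y ->
  - 2 * (sqrt (l ^ 2 / 2) * sqrt (y / (2 * sigma ^ 2))) = - (l / sigma) * sqrt y.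
Proof.
  intros hl hs hy.
  assert (hq : 0 < l / (2 * sigma)) by (apply Rdiv_lt_0_compat; lra).
  rewrite <- sqrt_mult_alt by (apply Rmult_le_pos; [apply pow_le|]; lra).
  replace (l ^ 2 / 2 * (y / (2 * sigma ^ 2))) with ((l / (2 * sigma)) ^ 2 * y) by (field; lra).
  rewrite sqrt_mult_alt, sqrt_pow2 by (try apply pow_le; lra).
  field. lra.
Qed.

Lemma marginal_integral m sigma l1 l2 : 0 < sigma -> 0 < l1 -> 0 < l2 ->
  exists C, 0 < C /\ forall k beta,
    IterInt (S m) (fun xs => normal_dens m sigma beta xs * (k * prior_unnorm m l1 l2 xs))
      (k * C * exp (- (l1 / sigma) * norm1 m beta - (l2 / sigma) * norm2 m beta)).
Proof.
  intros hsigma hl1 hl2.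
  set (c1 := l1 ^ 2 / 2). set (c2 := l2 ^ 2 / 2).
  assert (hc1 : 0 < c1) by (unfold c1; apply Rdiv_lt_0_compat; [apply pow_lt|]; lra).
  assert (hc2 : 0 < c2) by (unfold c2; apply Rdiv_lt_0_compat; [apply pow_lt|]; lra).
  destruct (is_ImpRInt_gig c1 hc1) as (K1 & hK1 & HK1).
  destruct (is_ImpRInt_gig c2 hc2) as (K2 & hK2 & HK2).
  set (s := / sqrt (2 * PI * sigma ^ 2)).
  assert (hs : 0 < s).
  { apply Rinv_0_lt_compat, sqrt_lt_R0. pose proof PI_RGT_0.
    pose proof (pow_lt sigma 2 hsigma). nra. }
  exists (s ^ m * K1 ^ m * K2). split; [repeat apply Rmult_lt_0_compat; try apply pow_lt; auto|].
  intros k beta.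
  set (b := fun j => beta j ^ 2 / (2 * sigma ^ 2)).
  assert (hb : forall j, 0 <= b j).
  { intros j. apply Rmult_le_pos; [apply pow2_ge_0|].
    left; apply Rinv_0_lt_compat. pose proof (pow_lt sigma 2 hsigma). lra. }
  set (B := sumR m b).
  assert (HB : B = sumR m (fun j => beta j ^ 2) / (2 * sigma ^ 2)).
  { unfold B, Rdiv. rewrite Rmult_comm, <- sumR_scal. apply sumR_ext. intros; unfold b, Rdiv; ring. }
  set (P := prodR m (fun j => exp (- 2 * (sqrt c1 * sqrt (b j))) * K1)).
  replace (k * (s ^ m * K1 ^ m * K2) *
           exp (- (l1 / sigma) * norm1 m beta - l2 / sigma * norm2 m beta))
    with ((k * s ^ m * P) * (exp (- 2 * (sqrt c2 * sqrt B)) * K2)).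
  - exists (fun t => (k * s ^ m * P) * gig c2 B t).
    split; [apply is_ImpRInt_ImpInt, is_ImpRInt_scal, HK2, sumR_nonneg; auto|].
    intros t ht.
    pose proof (IterInt_prod m (fun j => gig c1 (b j))
       (fun j => exp (- 2 * (sqrt c1 * sqrt (b j))) * K1)
       (k * s ^ m * gig c2 B t) (fun j => HK1 (b j) (hb j))) as HI.
    fold P in HI. replace (k * s ^ m * P * gig c2 B t) with (k * s ^ m * gig c2 B t * P) by ring.
    apply (IterInt_ext m _ _ _ HI). intros xs hl hf.
    rewrite marginal_integrand_cons by auto. reflexivity.
  - unfold P. rewrite prodR_mult, prodR_const, prodR_exp.
    rewrite (sumR_ext m _ (fun j => - (l1 / sigma) * Rabs (beta j))).
    2:{ intros j _. unfold c1, b. rewrite gig_decay_rate by (auto; apply pow2_ge_0).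
        rewrite <- Rsqr_pow2, sqrt_Rsqr_abs. reflexivity. }
    rewrite sumR_scal. unfold norm1, norm2. unfold c2. rewrite HB.
    rewrite gig_decay_rate by (auto; apply sumR_nonneg; intros; apply pow2_ge_0).
    replace (- (l1 / sigma) * sumR m (fun j => Rabs (beta j))
             - l2 / sigma * sqrt (sumR m (fun j => beta j ^ 2)))
      with (- (l1 / sigma) * sumR m (fun j => Rabs (beta j))
            + - (l2 / sigma) * sqrt (sumR m (fun j => beta j ^ 2))) by ring.
    rewrite exp_plus. ring.
Qed.

Theorem mainTheorem6 (m : nat) (sigma l1 l2 : R)
  (hm : (1 <= m)%nat) (hsigma : 0 < sigma) (hl1 : 0 < l1) (hl2 : 0 < l2) :
  exists Z : R, 0 < Z /\ IterInt (S m) (prior_unnorm m l1 l2) Z /\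
  exists C : R, 0 < C /\
    forall beta : nat -> R,
      IterInt (S m)
        (fun xs => normal_dens m sigma beta xs * (/ Z * prior_unnorm m l1 l2 xs))
        (C * exp (- (l1 / sigma) * norm1 m beta - (l2 / sigma) * norm2 m beta)).
Proof.
  destruct (prior_unnorm_integrable m l1 l2 hl1 hl2) as (Z & hZ & HZ).
  destruct (marginal_integral m sigma l1 l2 hsigma hl1 hl2) as (C & hC & HC).
  exists Z. split; [|split]; auto.
  exists (/ Z * C). split; [apply Rmult_lt_0_compat; [apply Rinv_0_lt_compat|]; auto|].
  intros beta. apply HC.
Qed.
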